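(* Let $(X,d)$ be a finite pseudometric space and let $A\subseteq X$ be a nonempty proper subset such that $d(i,j)=0$ for all $i,j\in A$. Let $\sigma:=A\,|\,A^c$. Then for every $\alpha_\sigma\ge0$, $$\operatorname{LIP}(X,d+\alpha_\sigma\delta_\sigma)=\operatorname{LIP}(X,d)+\alpha_\sigma S_\sigma .$$
   Context: Let $X$ be a finite set, $n:=|X|$, $\{\mathbbm 1_k\}_{k\in X}$ the standard basis of $\mathbb R^X$, and $\mathbbm 1_A:=\sum_{x\in A}\mathbbm 1_x$. A split of $X$ is an unordered pair of nonempty disjoint subsets $A,B$ with $A\cup B=X$, written $A|B$. For a split $\sigma=A|B$, $\delta_\sigma(i,j)=0$ if $i,j$ lie in the same side and $1$ otherwise, and $S_\sigma:=\operatorname{conv}\{\tfrac{|B|}{n}\mathbbm 1_A-\tfrac{|A|}{n}\mathbbm 1_B,\ \tfrac{|A|}{n}\mathbbm 1_B-\tfrac{|B|}{n}\mathbbm 1_A\}\subseteq\mathbb R^X$; $cS_\sigma$ denotes its scaling by $c\ge 0$, and $+$ is Minkowski sum. For a pseudometric $d$ on $X$ (symmetric, nonnegative, $d(x,x)=0$, triangle inequality; distinct points may have distance 0), $\operatorname{LIP}(X,d):=\{x\in\mathbb R^X\mid\sum_i x_i=0,\ x_i-x_j\le d(i,j)\ \forall i,j\in X\}$. *)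

(* X is a finite type T, R^X is T -> R for an arbitrary
   real field R (the statement is purely order-algebraic). *)
From HB Require Import structures.
From mathcomp Require Import all_boot all_order all_algebra.
Set Implicit Arguments. Unset Strict Implicit. Unset Printing Implicit Defensive.
Import Order.TTheory GRing.Theory Num.Theory.
Local Open Scope ring_scope.

Section Defs.
Variables (R : realFieldType) (T : finType).

Definition pseudometric (d : T -> T -> R) : Prop :=
  [/\ forall i j, d i j = d j i,
      forall i j, 0 <= d i j,
      forall i, d i i = 0
    & forall i j k, d i k <= d i j + d j k].

Definition indic (B : {set T}) : T -> R := fun k => if k \in B then 1 else 0.

Definition split_delta (A : {set T}) (i j : T) : R :=
  if (i \in A) == (j \in A) then 0 else 1.

Definition LIP (d : T -> T -> R) (x : T -> R) : Prop :=
  \sum_(i : T) x i = 0 /\ forall i j, x i - x j <= d i j.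

Definition split_vertex (A : {set T}) : T -> R :=
  fun k => (#|~: A|%:R / #|T|%:R) * indic A k - (#|A|%:R / #|T|%:R) * indic (~: A) k.

(* S_sigma = conv {v, -v}, where the other vertex |A|/n 1_B - |B|/n 1_A = -v *)
Definition split_polytope (A : {set T}) (x : T -> R) : Prop :=
  exists2 t : R, 0 <= t <= 1 &
    forall k, x k = t * split_vertex A k + (1 - t) * (- split_vertex A k).

Definition scale_set (c : R) (P : (T -> R) -> Prop) (x : T -> R) : Prop :=
  exists2 y, P y & forall k, x k = c * y k.

Definition mink_sum (P Q : (T -> R) -> Prop) (x : T -> R) : Prop :=
  exists y z, [/\ P y, Q z & forall k, x k = y k + z k].

End Defs.

Arguments indic {R T} B k.
Arguments split_delta {R T} A i j.
Arguments split_vertex {R T} A k.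
Arguments split_polytope {R T} A x.
Arguments LIP {R T} d x.
Arguments scale_set {R T} c P x.
Arguments mink_sum {R T} P Q x.
Arguments pseudometric {R T} d.

(* Writing v := split_vertex A, one has v = 1_A - |A|/n, so v i - v j = 1_A i - 1_A j,
   whose absolute value is delta_sigma(i, j), and alpha S_sigma = { c v : |c| <= alpha }.
   Adding c v to a d-Lipschitz point therefore yields a (d + alpha delta_sigma)-Lipschitz
   point.  Conversely, x - c v is d-Lipschitz as soon as c lies between every
   x_i - x_j - d(i, j) and every x_i - x_j + d(j, i) with i in A, j outside A; such a
   c in [-alpha, alpha] exists because d vanishes on A, so the triangle inequality puts
   every lower bound below every upper bound. *)
From HB Require Import structures.
From mathcomp Require Import all_boot all_order all_algebra.
From mathcomp Require Import ring lra.
Set Implicit Arguments. Unset Strict Implicit. Unset Printing Implicit Defensive.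
Import Order.TTheory GRing.Theory Num.Theory.
Local Open Scope ring_scope.

Lemma separating_value (R : realFieldType) (I : finType) (P : pred I)
    (l u : I -> R) (a b : R) :
  a <= b -> (forall i, P i -> l i <= b) -> (forall j, P j -> a <= u j) ->
  (forall i j, P i -> P j -> l i <= u j) ->
  exists2 c, a <= c <= b & forall i, P i -> l i <= c <= u i.
Proof.
move=> ab lb au lu; exists (\big[Order.max/a]_(i | P i) l i).
  by rewrite bigmax_ge_id /=; apply: bigmax_le.
move=> i Pi; rewrite (le_bigmax_cond _ _ Pi) /=.
by apply: bigmax_le => [|j Pj]; [exact: au | exact: lu].
Qed.

Section SplitVertex.
Variables (R : realFieldType) (T : finType) (A : {set T}).
Local Notation v := (split_vertex (R:=R) A).

Lemma split_vertexE k : v k = indic A k - #|A|%:R / #|T|%:R.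
Proof.
have n0 : #|T|%:R != 0 :> R by rewrite pnatr_eq0 -lt0n; apply/card_gt0P; exists k.
have cardC : #|~: A|%:R = #|T|%:R - #|A|%:R :> R by rewrite -(cardsC A) natrD; ring.
by rewrite /split_vertex /indic inE cardC; case: (k \in A) => /=; field.
Qed.

Lemma split_vertex_sub i j : v i - v j = indic A i - indic A j.
Proof. by rewrite !split_vertexE; ring. Qed.

Lemma sum_indic (B : {set T}) : \sum_k indic (R:=R) B k = #|B|%:R.
Proof. by rewrite /indic -big_mkcond /= sumr_const -[#|_|]/(#|[pred k in B]|). Qed.

Lemma sum_split_vertex : \sum_k v k = 0.
Proof.
by rewrite /split_vertex big_split /= -!mulr_sumr sumrN -mulr_sumr !sum_indic; ring.
Qed.

Lemma split_deltaE i j : split_delta A i j = `|indic A i - indic A j| :> R.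
Proof.
rewrite /split_delta /indic.
by case: (i \in A); case: (j \in A); rewrite /= ?subrr ?subr0 ?sub0r ?normrN ?normr0 ?normr1.
Qed.

Lemma split_polytopeP z :
  split_polytope A z <-> exists2 s, `|s| <= 1 & forall k, z k = s * v k.
Proof.
split=> [[t /andP[t0 t1] hz] | [s hs hz]].
  exists (2 * t - 1); first by rewrite ler_norml; apply/andP; split; lra.
  by move=> k; rewrite hz; ring.
move: hs; rewrite ler_norml => /andP[s0 s1].
exists ((s + 1) / 2); first by apply/andP; split; lra.
by move=> k; rewrite hz; field.
Qed.

Lemma scale_split_polytopeP alpha z : 0 <= alpha ->
  scale_set alpha (split_polytope A) z <->
  exists2 c, `|c| <= alpha & forall k, z k = c * v k.
Proof.
move=> alpha0; split=> [[w /split_polytopeP[s hs hw] hz] | [c hc hz]].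
  exists (alpha * s); first by rewrite normrM ger0_norm // ler_piMr.
  by move=> k; rewrite hz hw mulrA.
have [alpha_eq0|alphan0] := eqVneq alpha 0.
  move: hc; rewrite alpha_eq0 normr_le0 => /eqP c0.
  exists (fun=> 0); last by move=> k; rewrite hz c0 !mul0r.
  by apply/split_polytopeP; exists 0 => [|k]; rewrite ?normr0 ?mul0r.
exists (fun k => c / alpha * v k); last by move=> k; rewrite hz mulrA (mulrC alpha) divfK.
apply/split_polytopeP; exists (c / alpha) => //.
by rewrite normrM normfV (ger0_norm alpha0) ler_pdivrMr ?mul1r // lt_def alphan0.
Qed.

Lemma LIP_add_split_vertex d alpha x y c :
  LIP d y -> `|c| <= alpha -> (forall k, x k = y k + c * v k) ->
  LIP (fun i j => d i j + alpha * split_delta A i j) x.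
Proof.
move=> [sy Ly] hc hx; split.
  by rewrite (eq_bigr _ (fun k _ => hx k)) big_split /= sy -mulr_sumr sum_split_vertex mulr0 addr0.
move=> i j; rewrite !hx split_deltaE.
have -> : y i + c * v i - (y j + c * v j) = y i - y j + c * (v i - v j) by ring.
rewrite split_vertex_sub lerD // (le_trans (ler_norm _)) // normrM.
by rewrite ler_wpM2r.
Qed.

Lemma LIP_sub_split_vertex d alpha x :
  (forall i j k, d i k <= d i j + d j k) ->
  (forall i j, i \in A -> j \in A -> d i j = 0) -> 0 <= alpha ->
  LIP (fun i j => d i j + alpha * split_delta A i j) x ->
  exists2 c, `|c| <= alpha & LIP d (fun k => x k - c * v k).
Proof.
move=> dtri dA alpha0 [sx Lx].
have Lx_in i j : (i \in A) = (j \in A) -> x i - x j <= d i j.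
  by move=> ij; have := Lx i j; rewrite /split_delta ij eqxx mulr0 addr0.
have Lx_across i j : x i - x j <= d i j + alpha.
  have := Lx i j; rewrite /split_delta; case: eqP => _; rewrite ?mulr0 ?mulr1 //; lra.
pose P p := (p.1 \in A) && (p.2 \notin A).
pose lower (p : T * T) := x p.1 - x p.2 - d p.1 p.2.
pose upper (p : T * T) := x p.1 - x p.2 + d p.2 p.1.
have [c /andP[cl cu] hc] : exists2 c, - alpha <= c <= alpha &
    forall p, P p -> lower p <= c <= upper p.
  apply: separating_value => [| [i j] _ | [i j] _ | [p q] [i j] /andP[/= pA qA] /andP[/= iA jA]];
    rewrite /lower /upper /=; first lra.
  - by have := Lx_across i j; lra.
  - by have := Lx_across j i; lra.
  have xpi : x p - x i <= d p i by apply: Lx_in; rewrite pA iA.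
  have xjq : x j - x q <= d j q by apply: Lx_in; rewrite (negbTE jA) (negbTE qA).
  have djq := dtri j i q; have diq := dtri i p q.
  by rewrite (dA p i) // in xpi; rewrite (dA i p) // in diq; lra.
exists c; first by rewrite ler_norml cl cu.
split; first by rewrite big_split /= sx sumrN -mulr_sumr sum_split_vertex mulr0 subr0.
move=> i j.
have -> : x i - c * v i - (x j - c * v j) = x i - x j - c * (v i - v j) by ring.
rewrite split_vertex_sub /indic.
case iA: (i \in A); case jA: (j \in A).
- by rewrite subrr mulr0 subr0 Lx_in ?iA ?jA.
- have /andP[+ _] : lower (i, j) <= c <= upper (i, j) by apply: hc; rewrite /P iA jA.
  by rewrite /lower /=; lra.
- have /andP[_ +] : lower (j, i) <= c <= upper (j, i) by apply: hc; rewrite /P iA jA.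
  by rewrite /upper /=; lra.
- by rewrite subrr mulr0 subr0 Lx_in ?iA ?jA.
Qed.

End SplitVertex.

Theorem mainTheorem3 (R : realFieldType) (T : finType) (d : T -> T -> R)
    (A : {set T}) (alpha : R) :
  pseudometric d ->
  A != set0 -> A != [set: T] ->
  (forall i j, i \in A -> j \in A -> d i j = 0) ->
  0 <= alpha ->
  forall x : T -> R,
    LIP (fun i j => d i j + alpha * split_delta A i j) x <->
    mink_sum (LIP d) (scale_set alpha (split_polytope A)) x.
Proof.
move=> [_ _ _ dtri] _ _ dA alpha0 x; split.
  move=> /(LIP_sub_split_vertex dtri dA alpha0) [c hc Ly].
  exists (fun k => x k - c * split_vertex A k), (fun k => c * split_vertex A k).
  split=> //; last by move=> k; rewrite subrK.
  by apply/scale_split_polytopeP => //; exists c.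
move=> [y [z [Ly /(scale_split_polytopeP _ _ alpha0) [c hc hz] hx]]].
by apply: (LIP_add_split_vertex Ly hc) => k; rewrite hx hz.
Qed.
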